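(* Let $H(x,p)=\frac12(H_{11}p^2+2H_{12}px+H_{22}x^2)$ with real coefficients, $H_{11}\neq0$ and $H_{11}H_{22}-H_{12}^2<0$. Let $f(p,x)=\beta xp+\frac\gamma2x^2$ with $$\beta=\tfrac12\log|H_{11}|,\qquad\gamma=\frac{H_{12}}{H_{11}}\frac{\beta}{\sinh\beta}e^{\beta}.$$ Then $$\exp(X_f)H=\frac12\frac{H_{11}}{|H_{11}|}\left(p^2+\det(\mathrm{Hess}(H))\,x^2\right),$$ where $\det(\mathrm{Hess}(H))=H_{11}H_{22}-H_{12}^2$.
   Context: On $\mathbb R^2$ with coordinates $(x,p)$, the Hamiltonian vector field of $f$ is $X_f=\frac{\partial f}{\partial p}\partial_x-\frac{\partial f}{\partial x}\partial_p$ (here $X_f=\beta x\partial_x-(\beta p+\gamma x)\partial_p$). For a function $g$, $\exp(sX_f)g$ denotes $g\circ\Phi_s$ where $\Phi_s$ is the time-$s$ flow of $X_f$; $\exp(X_f)g$ is the case $s=1$. *)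

From Stdlib Require Import Reals Lra.
From Coquelicot Require Import Coquelicot.
Open Scope R_scope.

(* Hamiltonian vector field on R^2 with coordinates (x,p):
   X_f = (df/dp) d_x - (df/dx) d_p, returned as the pair of components. *)
Definition ham_vf (f : R -> R -> R) (z : R * R) : R * R :=
  (Derive (fun q => f (fst z) q) (snd z), - Derive (fun y => f y (snd z)) (fst z)).

Definition is_flow (V : R * R -> R * R) (Phi : R -> R * R -> R * R) : Prop :=
  forall z : R * R,
    Phi 0 z = z /\
    forall s : R,
      is_derive (fun t => fst (Phi t z)) s (fst (V (Phi s z))) /\
      is_derive (fun t => snd (Phi t z)) s (snd (V (Phi s z))).

(* exp(s X_f) g := g o Phi_s *)
Definition exp_flow (Phi : R -> R * R -> R * R) (s : R) (g : R * R -> R) : R * R -> R :=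
  fun z => g (Phi s z).

(* beta / sinh beta, extended continuously by 1 at beta = 0. *)
Definition b_over_sinh (b : R) : R := if Req_EM_T b 0 then 1 else b / sinh b.

(** The vector field of [f x p = beta x p + gamma/2 x^2] is linear and
    triangular: [x' = beta x] and [p' = -(beta p + gamma x)].  Hence
    [x(t) = x e^(beta t)], and the integrating factor [e^(beta t)] turns the
    second equation into [(p e^(beta t))' = -gamma x e^(2 beta t)], whose
    integral over [0,1] is [-gamma x e^beta sinh beta / beta].  The choice of
    [gamma] makes the time-1 map
    [(x, p) |-> (E x, p / E - H12/H11 E x)] with [E = e^beta = sqrt |H11|],
    and substituting it into [H] kills the mixed term. *)

From Stdlib Require Import Reals Lra.
From Coquelicot Require Import Coquelicot.
Open Scope R_scope.

Lemma is_derive_zero_const (g : R -> R) :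
  (forall t, is_derive g t 0) -> forall s t, g s = g t.
Proof.
  intros Hg s t.
  destruct (Rtotal_order s t) as [Hst | [-> | Hts]]; [| reflexivity |].
  - apply (eq_is_derive g); [intros u _; apply Hg | exact Hst].
  - symmetry; apply (eq_is_derive g); [intros u _; apply Hg | exact Hts].
Qed.

Lemma linear_ode_exp (a : R) (g : R -> R) :
  (forall t, is_derive g t (a * g t)) -> forall t, g t = g 0 * exp (a * t).
Proof.
  intros Hg t.
  assert (Hconst : g t * exp (- a * t) = g 0 * exp (- a * 0)).
  { apply (is_derive_zero_const (fun s => g s * exp (- a * s))).
    intros s.
    replace 0 with (a * g s * exp (- a * s) + g s * (- a * exp (- a * s))) by ring.
    apply (is_derive_mult g (fun s => exp (- a * s))); [apply Hg | | intros; apply Rmult_comm].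
    auto_derive; [exact I | ring]. }
  rewrite Rmult_0_r, exp_0, Rmult_1_r in Hconst.
  rewrite <- Hconst, Rmult_assoc, <- exp_plus.
  replace (- a * t + a * t) with 0 by ring.
  rewrite exp_0; ring.
Qed.

Lemma sinh_neq0 (b : R) : b <> 0 -> sinh b <> 0.
Proof.
  intros Hb; rewrite <- sinh_0.
  destruct (Rtotal_order b 0) as [Hlt | [Heq | Hgt]].
  - apply Rlt_not_eq, sinh_lt, Hlt.
  - contradiction.
  - apply Rgt_not_eq, sinh_lt, Hgt.
Qed.

Lemma b_over_sinh_neq0 (b : R) : b_over_sinh b <> 0.
Proof.
  unfold b_over_sinh; destruct (Req_EM_T b 0) as [_ | Hb].
  - exact R1_neq_R0.
  - unfold Rdiv; apply Rmult_integral_contrapositive_currified;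
      [exact Hb | apply Rinv_neq_0_compat, sinh_neq0, Hb].
Qed.

(** [int_0^1 e^(2 b t) dt = e^b sinh b / b = e^b / b_over_sinh b], also at [b = 0]. *)
Lemma exp2_primitive_increment (b c : R) (q : R -> R) :
  (forall t, is_derive q t (c * exp (2 * b * t))) ->
  b_over_sinh b * (q 1 - q 0) = c * exp b.
Proof.
  intros Hq; unfold b_over_sinh.
  destruct (Req_EM_T b 0) as [-> | Hb].
  - assert (Hconst : q 1 - c * 1 = q 0 - c * 0).
    { apply (is_derive_zero_const (fun t => q t - c * t)); intros t.
      replace 0 with (c * exp (2 * 0 * t) - c) by (rewrite Rmult_0_r, Rmult_0_l, exp_0; ring).
      apply (is_derive_minus q (fun t => c * t)); [apply Hq |].
      auto_derive; [exact I | ring]. }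
    rewrite exp_0; lra.
  - assert (Hconst : q 1 - c * exp (2 * b * 1) / (2 * b)
                     = q 0 - c * exp (2 * b * 0) / (2 * b)).
    { apply (is_derive_zero_const (fun t => q t - c * exp (2 * b * t) / (2 * b))); intros t.
      replace 0 with (c * exp (2 * b * t) - c * exp (2 * b * t)) by ring.
      apply (is_derive_minus q (fun t => c * exp (2 * b * t) / (2 * b))); [apply Hq |].
      auto_derive; [exact I | field; exact Hb]. }
    assert (Hsinh := sinh_neq0 b Hb).
    unfold sinh in *; rewrite exp_Ropp in *.
    replace (2 * b * 1) with (b + b) in Hconst by ring.
    rewrite Rmult_0_r, exp_0, exp_plus in Hconst.
    replace (q 1 - q 0) with (c * (exp b * exp b - 1) / (2 * b)) by lra.
    assert (Hexp := exp_pos b).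
    assert (Hsq : exp b * exp b - 1 <> 0).
    { intros Hsq; apply Hsinh.
      replace (exp b - / exp b) with ((exp b * exp b - 1) / exp b) by (field; lra).
      rewrite Hsq; unfold Rdiv; ring. }
    field; repeat split; lra.
Qed.

Lemma is_flow_ext (V W : R * R -> R * R) (Phi : R -> R * R -> R * R) :
  (forall w, V w = W w) -> is_flow V Phi -> is_flow W Phi.
Proof.
  intros HVW Hflow z.
  destruct (Hflow z) as [Hinit Hderiv].
  split; [exact Hinit |]; intros s; rewrite <- HVW; apply Hderiv.
Qed.

Lemma ham_vf_linear (b c : R) (w : R * R) :
  ham_vf (fun x p => b * x * p + c / 2 * x ^ 2) w
  = (b * fst w, - (b * snd w + c * fst w)).
Proof.
  unfold ham_vf; f_equal; [| f_equal]; apply is_derive_unique;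
    auto_derive; first [exact I | field].
Qed.

Section LinearFlow.

Variables (b c : R) (Phi : R -> R * R -> R * R).
Hypothesis Hflow : is_flow (fun w => (b * fst w, - (b * snd w + c * fst w))) Phi.

Lemma linear_flow_fst (z : R * R) (t : R) : fst (Phi t z) = fst z * exp (b * t).
Proof.
  destruct (Hflow z) as [Hinit Hderiv].
  rewrite (linear_ode_exp b (fun t => fst (Phi t z))), Hinit; [reflexivity |].
  intros s; apply Hderiv.
Qed.

Lemma linear_flow_snd_time1 (z : R * R) :
  snd (Phi 1 z) = snd z / exp b - c / b_over_sinh b * fst z.
Proof.
  destruct (Hflow z) as [Hinit Hderiv].
  assert (Hincr : b_over_sinh b * (snd (Phi 1 z) * exp (b * 1) - snd (Phi 0 z) * exp (b * 0))
                  = - c * fst z * exp b).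
  { apply (exp2_primitive_increment b (- c * fst z) (fun t => snd (Phi t z) * exp (b * t))).
    intros t.
    replace (- c * fst z * exp (2 * b * t))
      with (- (b * snd (Phi t z) + c * fst (Phi t z)) * exp (b * t)
            + snd (Phi t z) * (b * exp (b * t)))
      by (rewrite linear_flow_fst;
          replace (2 * b * t) with (b * t + b * t) by ring; rewrite exp_plus; ring).
    apply (is_derive_mult (fun t => snd (Phi t z)) (fun t => exp (b * t)));
      [apply Hderiv | | intros; apply Rmult_comm].
    auto_derive; [exact I | ring]. }
  rewrite Hinit, Rmult_1_r, Rmult_0_r, exp_0, Rmult_1_r in Hincr.
  assert (Hbos := b_over_sinh_neq0 b).
  assert (Hexp : exp b <> 0) by apply Rgt_not_eq, exp_pos.
  apply (Rmult_eq_reg_l (b_over_sinh b * exp b));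
    [| apply Rmult_integral_contrapositive_currified; assumption].
  replace (b_over_sinh b * exp b * snd (Phi 1 z))
    with (b_over_sinh b * (snd (Phi 1 z) * exp b - snd z) + b_over_sinh b * snd z) by ring.
  rewrite Hincr; field; split; assumption.
Qed.

End LinearFlow.

Lemma exp_half_ln_sq (a : R) : 0 < a -> exp (/ 2 * ln a) ^ 2 = a.
Proof.
  intros Ha.
  rewrite <- (exp_ln a Ha) at 2.
  simpl; rewrite Rmult_1_r, <- exp_plus; f_equal; field.
Qed.

Lemma quadratic_form_time1 (H11 H12 H22 E x p : R) :
  H11 <> 0 -> 0 < E -> E ^ 2 = Rabs H11 ->
  / 2 * (H11 * (p / E - H12 / H11 * E * x) ^ 2
         + 2 * H12 * (p / E - H12 / H11 * E * x) * (E * x) + H22 * (E * x) ^ 2)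
  = / 2 * (H11 / Rabs H11) * (p ^ 2 + (H11 * H22 - H12 ^ 2) * x ^ 2).
Proof.
  intros HH11 HE HE2.
  destruct (Rcase_abs H11) as [Hneg | Hpos].
  - rewrite Rabs_left in HE2 |- * by exact Hneg.
    replace H11 with (- E ^ 2) by lra.
    field; lra.
  - rewrite Rabs_right in HE2 |- * by exact Hpos.
    rewrite <- HE2; field; lra.
Qed.

Theorem lemma4p5 (H11 H12 H22 : R) (Phi : R -> R * R -> R * R) :
  H11 <> 0 ->
  H11 * H22 - H12 ^ 2 < 0 ->
  let H : R * R -> R := fun z =>
    / 2 * (H11 * (snd z) ^ 2 + 2 * H12 * (snd z) * (fst z) + H22 * (fst z) ^ 2) in
  let beta := / 2 * ln (Rabs H11) in
  let gamma := H12 / H11 * b_over_sinh beta * exp beta in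
  let f : R -> R -> R := fun x p => beta * x * p + gamma / 2 * x ^ 2 in
  is_flow (ham_vf f) Phi ->
  forall z : R * R,
    exp_flow Phi 1 H z =
    / 2 * (H11 / Rabs H11) * ((snd z) ^ 2 + (H11 * H22 - H12 ^ 2) * (fst z) ^ 2).
Proof.
  intros HH11 _ H beta gamma f Hflow z.
  apply (is_flow_ext _ _ _ (ham_vf_linear beta gamma)) in Hflow.
  assert (Hx1 : fst (Phi 1 z) = exp beta * fst z)
    by (rewrite (linear_flow_fst beta gamma Phi Hflow), Rmult_1_r; apply Rmult_comm).
  assert (Hp1 : snd (Phi 1 z) = snd z / exp beta - H12 / H11 * exp beta * fst z).
  { rewrite (linear_flow_snd_time1 beta gamma Phi Hflow); unfold gamma.
    assert (Hbos := b_over_sinh_neq0 beta).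
    field; repeat split; [exact HH11 | apply Rgt_not_eq, exp_pos | exact Hbos]. }
  unfold exp_flow, H; rewrite Hx1, Hp1.
  apply quadratic_form_time1; [exact HH11 | apply exp_pos |].
  apply exp_half_ln_sq, Rabs_pos_lt, HH11.
Qed.
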